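(* Assume $\|\mathbf{x}_t\|_\infty\le1$ for all $t$. Let $\mathbf{v}\in\mathbb{R}^d$ be any vector (fixed given $B_1,\dots,B_{\tau-1}$) and $\mathbf{z}_\tau=\mathbf{h}_{\tau^2}\mathbf{v}-\mathbf{x}_{\tau^2}\mathbf{x}_{\tau^2}^\top\mathbf{v}$. Then for all $i\in[d]$, $$|z_{\tau,i}|\le\frac{(d-1)(d-2)}{(k-1)(k-2)}\|\mathbf{v}\|_1,\qquad\mathbb{E}_\tau[z_{\tau,i}^2]\le\Big(\frac{(d-1)(d-2)}{(k-1)(k-2)}-1\Big)\|\mathbf{v}\|_2^2+\Big(\frac{d-1}{k-1}-1\Big)\big(\|\mathbf{v}\|_1^2-\|\mathbf{v}\|_2^2\big).$$
   Context: Integers $3\le k\le d-3$, $[d]=\{1,\dots,d\}$. SAMPLING$(k,d,\mathbf{w})$ for nonzero $\mathbf{w}\in\mathbb{R}^d$: with $q_i=|w_i|/\|\mathbf{w}\|_1$, draw $I_1\in[d]$ with $\mathbb{P}(I_1=i)=q_i$, then $k-1$ distinct indices uniformly without replacement from $[d]\setminus\{I_1\}$; output the $k$-set $B$. At round $\tau$, $B_\tau=$SAMPLING$(k,d,\hat{\mathbf{w}}_{\tau-1})$ for a nonzero vector $\hat{\mathbf{w}}_{\tau-1}$ determined by $B_1,\dots,B_{\tau-1}$ ($\hat{\mathbf{w}}_0=\frac1d\mathbf{1}_d$). $\mathbb{P}$ and $\mathbb{E}_\tau[\cdot]=\mathbb{E}[\cdot\mid B_1,\dots,B_{\tau-1}]$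 are over $B_\tau$. The instance $\mathbf{x}_{\tau^2}\in\mathbb{R}^d$ is fixed given the past; $h_{\tau^2}[i,i]=\frac{x_{\tau^2,i}^2}{\mathbb{P}[i\in B_\tau]}\mathbb{I}_{i\in B_\tau}$ and $h_{\tau^2}[i,j]=\frac{x_{\tau^2,i}x_{\tau^2,j}}{\mathbb{P}[i,j\in B_\tau]}\mathbb{I}_{i,j\in B_\tau}$ for $i\ne j$. *)

From HB Require Import structures.
From mathcomp Require Import all_boot all_order all_algebra.
Set Implicit Arguments. Unset Strict Implicit. Unset Printing Implicit Defensive.
Import Order.TTheory GRing.Theory Num.Theory.
Local Open Scope ring_scope.

Section Sampling.
Variables (R : realFieldType) (d k : nat).

Definition qprob (w : 'cV[R]_d) (i : 'I_d) : R :=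
  `|w i 0| / \sum_(j < d) `|w j 0|.

(* SAMPLING(k,d,w): draw I_1 = i with prob. q_i, then a (k-1)-subset S of
   [d] \ {i} uniformly (each with prob. 1 / C(d-1,k-1)); output B = {i} u S.
   samplingP w B is the probability that the output equals B. *)
Definition samplingP (w : 'cV[R]_d) (B : {set 'I_d}) : R :=
  \sum_(i < d) \sum_(S : {set 'I_d} | (i \notin S) && (#|S| == k.-1)%N)
     (qprob w i / ('C(d.-1, k.-1))%:R) * (i |: S == B)%:R.

Definition prob1 (w : 'cV[R]_d) (i : 'I_d) : R :=
  \sum_(B : {set 'I_d} | i \in B) samplingP w B.
Definition prob2 (w : 'cV[R]_d) (i j : 'I_d) : R :=
  \sum_(B : {set 'I_d} | (i \in B) && (j \in B)) samplingP w B.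

Definition Esamp (w : 'cV[R]_d) (f : {set 'I_d} -> R) : R :=
  \sum_(B : {set 'I_d}) samplingP w B * f B.

Definition hmat (w x : 'cV[R]_d) (B : {set 'I_d}) : 'M[R]_d :=
  \matrix_(i, j)
    if i == j then x i 0 ^+ 2 / prob1 w i * (i \in B)%:R
    else x i 0 * x j 0 / prob2 w i j * ((i \in B) && (j \in B))%:R.

Definition zvec (w x v : 'cV[R]_d) (B : {set 'I_d}) : 'cV[R]_d :=
  hmat w x B *m v - x *m x^T *m v.

Definition norm1 (v : 'cV[R]_d) : R := \sum_(i < d) `|v i 0|.
Definition norm2sq (v : 'cV[R]_d) : R := \sum_(i < d) v i 0 ^+ 2.

End Sampling.

From HB Require Import structures.
From mathcomp Require Import all_boot all_order all_algebra.
From mathcomp Require Import ring lra zify.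
Set Implicit Arguments. Unset Strict Implicit. Unset Printing Implicit Defensive.
Import Order.TTheory GRing.Theory Num.Theory.
Local Open Scope ring_scope.

(** Writing [p_T] for the probability that the sampled set contains [T], the
  estimator is [z_i = sum_j x_i x_j v_j (1[{i,j} ⊆ B] / p_{i,j} - 1)], so
  [E z_i^2] is a quadratic form in [v] with coefficients
  [p_{{i,j} ∪ {i,l}} / (p_{i,j} p_{i,l}) - 1].  Conditioning on the first index,
  [p_T] is a convex combination of [g_{|T|-1}] and [g_{|T|}], where [g_t] is
  the probability that a fixed [t]-set lies in a uniform [(k-1)]-subset of the
  other [d-1] indices.  Hence [g_2 <= p_{i,j} <= 1] and [g_1 <= p_{i}].  The
  first gives [|z_i| <= sum_j |v_j| / p_{i,j} <= |v|_1 / g_2]; together they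
  bound the diagonal coefficients by [1/g_2 - 1] and those with [i ∈ {j,l}] by
  [1/g_1 - 1].  For three distinct indices an explicit polynomial inequality,
  which needs [k >= 3] and [d >= k + 3], gives the same bound [1/g_1 - 1].
  Finally [1/g_2 = (d-1)(d-2)/((k-1)(k-2))] and [1/g_1 = (d-1)/(k-1)]. *)

Lemma card_draws_superset (T : finType) (U A : {set T}) n :
  A \subset U -> (#|A| <= n)%N ->
  #|[set S : {set T} | S \subset U & (#|S| == n) && (A \subset S)]|
    = 'C(#|U :\: A|, n - #|A|).
Proof.
move=> sAU leAn; rewrite -cards_draws.
set D := [set X : {set T} | X \subset U :\: A & #|X| == n - #|A|]%N.
have addAK : {in D, cancel (fun X => X :|: A) (fun S => S :\: A)}.
  move=> X; rewrite inE subsetD => /andP[/andP[_ dXA] _].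
  by rewrite setDUl setDv setU0; apply/setDidPl.
rewrite -(card_in_imset (can_in_inj addAK)); apply: eq_card => S.
rewrite inE; apply/and3P/imsetP => [[sSU /eqP cS sAS] | [X DX ->]].
  exists (S :\: A); last by rewrite -{1}(setID S A) (setIidPr sAS) setUC.
  by rewrite inE setSD //= cardsDS // cS.
move: DX; rewrite inE subsetD => /andP[/andP[sXU dXA] /eqP cX].
split; [by rewrite subUset sAU sXU | | exact: subsetUr].
by rewrite cardsU (disjoint_setI0 dXA) cards0 subn0 cX subnK.
Qed.

Lemma norm_invB1_le (R : realFieldType) (p lo : R) :
  0 < lo -> lo <= p -> p <= 1 -> `|p^-1 - 1| <= lo^-1 - 1.
Proof.
move=> lo_gt0 lo_le_p p_le1; have p_gt0 : 0 < p := lt_le_trans lo_gt0 lo_le_p.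
have pV_ge1 : 1 <= p^-1 by rewrite invf_ge1.
have : p^-1 <= lo^-1 by rewrite lef_pV2 // posrE.
by rewrite ger0_norm; lra.
Qed.

Lemma double_sum_diag_split (R : comPzRingType) n (a : 'I_n -> R) (c c' : R) :
  \sum_j \sum_l a j * a l * (if j == l then c else c')
    = c * \sum_j a j ^+ 2 + c' * ((\sum_j a j) ^+ 2 - \sum_j a j ^+ 2).
Proof.
have row j : \sum_l a j * a l * (if j == l then c else c')
    = c' * \sum_l a j * a l + (c - c') * a j ^+ 2.
  rewrite (bigD1 j) //= eqxx (eq_bigr (fun l => a j * a l * c')) => [|l]; last first.
    by rewrite eq_sym => /negbTE ->.
  by rewrite [in RHS](bigD1 j) //= -mulr_suml; ring.
have sqr_sum : (\sum_j a j) ^+ 2 = \sum_j \sum_l a j * a l.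
  by rewrite expr2 big_distrl; apply: eq_bigr => j _; rewrite big_distrr.
rewrite (eq_bigr _ (fun j _ => row j)) big_split /= -!mulr_sumr sqr_sum; ring.
Qed.

Section InclusionProbability.
Variables (R : realFieldType) (d k : nat) (w : 'cV[R]_d).

Definition incl_prob (T : {set 'I_d}) : R := Esamp k w (fun B => (T \subset B)%:R).

Definition qmass (T : {set 'I_d}) : R := \sum_(m < d) qprob w m * (m \in T)%:R.

(* [unif_incl t] is the probability that a fixed [t]-subset of a [(d-1)]-set
   lies in a uniformly drawn [(k-1)]-subset of it. *)
Definition unif_incl (t : nat) : R :=
  if (t <= k.-1)%N then 'C(d.-1 - t, k.-1 - t)%:R / 'C(d.-1, k.-1)%:R else 0.

Definition incl_ratio (j : nat) : R := (k - j)%:R / (d - j)%:R.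

Definition incl_dev (T B : {set 'I_d}) : R := (T \subset B)%:R / incl_prob T - 1.

Lemma eq_Esamp (f f' : {set 'I_d} -> R) :
  (forall B, f B = f' B) -> Esamp k w f = Esamp k w f'.
Proof. by move=> ff'; apply: eq_bigr => B _; rewrite ff'. Qed.

Lemma Esamp_sampling (f : {set 'I_d} -> R) :
  Esamp k w f = \sum_(m < d) qprob w m / 'C(d.-1, k.-1)%:R *
    \sum_(S : {set 'I_d} | (m \notin S) && (#|S| == k.-1)%N) f (m |: S).
Proof.
rewrite /Esamp /samplingP.
under eq_bigr => B _ do rewrite mulr_suml.
rewrite exchange_big /=; apply: eq_bigr => m _; rewrite mulr_sumr.
under eq_bigr => B _ do rewrite mulr_suml.
rewrite exchange_big /=; apply: eq_bigr => S _.
rewrite (bigD1 (m |: S)) //= eqxx mulr1 big1 ?addr0 // => B neB.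
by rewrite eq_sym (negbTE neB) mulr0 mul0r.
Qed.

Lemma Esamp_sqr_sum (u : 'I_d -> R) (e : 'I_d -> {set 'I_d} -> R) :
  Esamp k w (fun B => (\sum_j u j * e j B) ^+ 2)
    = \sum_j \sum_l u j * u l * Esamp k w (fun B => e j B * e l B).
Proof.
have expand B : samplingP k w B * (\sum_j u j * e j B) ^+ 2
    = \sum_j \sum_l u j * u l * (samplingP k w B * (e j B * e l B)).
  move: (samplingP k w B) => c.
  rewrite expr2 big_distrl /= mulr_sumr; apply: eq_bigr => j _.
  rewrite big_distrr /= mulr_sumr; apply: eq_bigr => l _; ring.
rewrite /Esamp (eq_bigr _ (fun B _ => expand B)) exchange_big /=.
apply: eq_bigr => j _; rewrite exchange_big /=; apply: eq_bigr => l _.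
by rewrite mulr_sumr.
Qed.

Lemma sum_draws_incl (T : {set 'I_d}) m :
  \sum_(S : {set 'I_d} | (m \notin S) && (#|S| == k.-1)%N) (T \subset m |: S)%:R
    = (if (#|T :\ m| <= k.-1)%N
       then 'C(d.-1 - #|T :\ m|, k.-1 - #|T :\ m|) else 0%N)%:R :> R.
Proof.
rewrite (eq_bigr (fun S => if T \subset m |: S then 1 else 0)); last first.
  by move=> S _; case: (_ \subset _).
rewrite -big_mkcondr sumr_const /=.
set P := (X in #|X|).
have -> : #|P| = #|[set S : {set 'I_d} |
                   S \subset [set~ m] & (#|S| == k.-1)%N && (T :\ m \subset S)]|.
  by apply: eq_card => S; rewrite inE subsetC sub1set inE subDset andbA.
have sTm : T :\ m \subset [set~ m] by apply/subsetP => y; rewrite !inE => /andP[].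
case: leqP => [le_Tk | lt_kT].
  by rewrite card_draws_superset // cardsDS // cardsC1 card_ord.
rewrite eq_card0 // => S; rewrite !inE.
apply/negbTE/negP => /andP[_ /andP[/eqP cS sTS]].
by move: (subset_leq_card sTS); rewrite cS leqNgt lt_kT.
Qed.

Lemma incl_probE (T : {set 'I_d}) :
  incl_prob T = \sum_(m < d) qprob w m * unif_incl #|T :\ m|.
Proof.
rewrite /incl_prob Esamp_sampling; apply: eq_bigr => m _.
rewrite sum_draws_incl /unif_incl.
by case: ifP => _; rewrite ?mulr0 // mulrAC -mulrA.
Qed.

Lemma prob1E i : prob1 k w i = incl_prob [set i].
Proof.
rewrite /prob1 /incl_prob /Esamp big_mkcond; apply: eq_bigr => B _.
by rewrite sub1set; case: (i \in B); rewrite ?mulr1 ?mulr0.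
Qed.

Lemma prob2E i j : prob2 k w i j = incl_prob [set i; j].
Proof.
rewrite /prob2 /incl_prob /Esamp big_mkcond; apply: eq_bigr => B _.
by rewrite subUset !sub1set; case: (_ && _); rewrite ?mulr1 ?mulr0.
Qed.

Lemma zvecE (x v : 'cV[R]_d) B i :
  zvec k w x v B i 0 = \sum_j x i 0 * x j 0 * v j 0 * incl_dev [set i; j] B.
Proof.
rewrite /zvec !mxE -sumrB; apply: eq_bigr => j _.
rewrite !mxE big_ord1 !mxE /incl_dev.
case: eqP => [<-|_]; first by rewrite setUid prob1E sub1set; ring.
by rewrite prob2E subUset !sub1set; ring.
Qed.

Lemma unif_incl_ge0 t : 0 <= unif_incl t.
Proof. by rewrite /unif_incl; case: ifP => _; rewrite ?divr_ge0. Qed.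

Lemma incl_ratio_ge0 j : 0 <= incl_ratio j.
Proof. exact: divr_ge0. Qed.

Hypothesis le_kd : (k <= d)%N.

Lemma incl_ratio_le1 j : incl_ratio j <= 1.
Proof.
rewrite /incl_ratio; have [->|dj] := eqVneq (d - j)%N 0%N.
  by rewrite invr0 mulr0 ler01.
by rewrite ler_pdivrMr ?ltr0n ?lt0n // mul1r ler_nat leq_sub2r.
Qed.

Lemma unif_incl0 : unif_incl 0 = 1.
Proof.
rewrite /unif_incl leq0n !subn0 divff // pnatr_eq0 -lt0n bin_gt0; lia.
Qed.

(* Beyond [k - 1] both sides vanish: truncated subtraction makes [incl_ratio k] zero. *)
Lemma unif_inclS t : unif_incl t.+1 = unif_incl t * incl_ratio t.+1.
Proof.
rewrite /unif_incl /incl_ratio; case: (leqP t.+1 k.-1) => [lt_tk | le_kt].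
  rewrite (ltnW lt_tk).
  have -> : (k - t.+1 = k.-1 - t)%N by lia.
  have -> : (d - t.+1 = d.-1 - t)%N by lia.
  have dt_neq0 : (d.-1 - t)%:R != 0 :> R by rewrite pnatr_eq0; lia.
  have binS : ((d.-1 - t) * 'C(d.-1 - t.+1, k.-1 - t.+1)
                = (k.-1 - t) * 'C(d.-1 - t, k.-1 - t))%N.
    have -> : (d.-1 - t.+1 = (d.-1 - t).-1)%N by lia.
    have -> : (k.-1 - t = (k.-1 - t.+1).+1)%N by lia.
    exact: mul_bin_diag.
  have -> : 'C(d.-1 - t.+1, k.-1 - t.+1)%:R
      = (k.-1 - t)%:R * 'C(d.-1 - t, k.-1 - t)%:R / (d.-1 - t)%:R :> R.
    by rewrite -natrM -binS natrM mulrAC divff // mul1r.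
  by ring.
case: ifP => _; last by rewrite mul0r.
by rewrite (_ : k - t.+1 = 0)%N ?mul0r ?mulr0 //; lia.
Qed.

Lemma unif_incl_nonincr t : unif_incl t.+1 <= unif_incl t.
Proof.
by rewrite unif_inclS; apply: ler_piMr; [exact: unif_incl_ge0 | exact: incl_ratio_le1].
Qed.

Lemma unif_incl_le m n : (m <= n)%N -> unif_incl n <= unif_incl m.
Proof.
elim: n => [|n IHn]; first by rewrite leqn0 => /eqP->.
rewrite leq_eqVlt => /orP[/eqP-> // | lt_mn].
exact: le_trans (unif_incl_nonincr n) (IHn lt_mn).
Qed.

Hypothesis w_neq0 : w != 0.

Lemma qprob_ge0 m : 0 <= qprob w m.
Proof. by rewrite divr_ge0 // sumr_ge0. Qed.

Lemma sum_qprob : \sum_(m < d) qprob w m = 1.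
Proof.
rewrite /qprob -mulr_suml divff //; apply: contra w_neq0 => /eqP w_norm0.
apply/eqP/matrixP => a b; rewrite (ord1 b) mxE; apply/normr0_eq0.
exact: (psumr_eq0P _ w_norm0).
Qed.

Lemma qmass_ge0 (T : {set 'I_d}) : 0 <= qmass T.
Proof. by apply: sumr_ge0 => m _; rewrite mulr_ge0 ?qprob_ge0. Qed.

Lemma qmass_le1 (T : {set 'I_d}) : qmass T <= 1.
Proof.
rewrite -sum_qprob; apply: ler_sum => m _.
by rewrite ler_piMr ?qprob_ge0 // lern1 leq_b1.
Qed.

Lemma qmass_subset (T T' : {set 'I_d}) : T \subset T' -> qmass T <= qmass T'.
Proof.
move=> /subsetP sTT'; apply: ler_sum => m _; rewrite ler_wpM2l ?qprob_ge0 //.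
by have := sTT' m; case: (m \in T) => //= ->.
Qed.

Lemma qmass_setU (T T' : {set 'I_d}) : qmass (T :|: T') <= qmass T + qmass T'.
Proof.
rewrite -big_split /=; apply: ler_sum => m _; rewrite -mulrDr ler_wpM2l ?qprob_ge0 //.
by rewrite inE; case: (m \in T); case: (m \in T'); rewrite /=; lra.
Qed.

Lemma incl_prob_split (T : {set 'I_d}) :
  incl_prob T = qmass T * unif_incl #|T|.-1 + (1 - qmass T) * unif_incl #|T|.
Proof.
have -> : 1 - qmass T = \sum_(m < d) qprob w m * (1 - (m \in T)%:R).
  under [in RHS]eq_bigr => m _ do rewrite mulrBr mulr1.
  by rewrite sumrB sum_qprob.
rewrite incl_probE /qmass !mulr_suml -big_split /=; apply: eq_bigr => m _.
by rewrite (cardsD1 m T); case: (m \in T); rewrite /= ?add1n ?add0n; ring.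
Qed.

Lemma incl_prob_bounds (T : {set 'I_d}) :
  unif_incl #|T| <= incl_prob T <= unif_incl #|T|.-1.
Proof.
have : unif_incl #|T| <= unif_incl #|T|.-1 by apply: unif_incl_le; rewrite leq_pred.
have := qmass_ge0 T; have := qmass_le1 T.
by rewrite incl_prob_split; move=> *; apply/andP; split; nra.
Qed.

Lemma sum_samplingP : \sum_B samplingP k w B = 1.
Proof.
transitivity (incl_prob set0); first by apply: eq_bigr => B _; rewrite sub0set mulr1.
rewrite incl_probE -[RHS]sum_qprob; apply: eq_bigr => m _.
by rewrite set0D cards0 unif_incl0 mulr1.
Qed.

Lemma norm_incl_dev_le (T B : {set 'I_d}) :
  0 < incl_prob T -> incl_prob T <= 1 -> `|incl_dev T B| <= (incl_prob T)^-1.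
Proof.
move=> p_gt0 p_le1; have pV_ge1 : 1 <= (incl_prob T)^-1 by rewrite invf_ge1.
rewrite /incl_dev; case: (T \subset B); last by rewrite mul0r sub0r normrN normr1.
by rewrite mul1r ger0_norm ?subr_ge0 // lerBlDr lerDl.
Qed.

Lemma Esamp_incl_dev_mul (T1 T2 : {set 'I_d}) :
  incl_prob T1 != 0 -> incl_prob T2 != 0 ->
  Esamp k w (fun B => incl_dev T1 B * incl_dev T2 B)
    = incl_prob (T1 :|: T2) / (incl_prob T1 * incl_prob T2) - 1.
Proof.
move=> p1_neq0 p2_neq0; set p1 := incl_prob T1; set p2 := incl_prob T2.
have expand B : samplingP k w B * (incl_dev T1 B * incl_dev T2 B)
  = samplingP k w B * (T1 :|: T2 \subset B)%:R / p1 / p2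
    - samplingP k w B * (T1 \subset B)%:R / p1
    - samplingP k w B * (T2 \subset B)%:R / p2 + samplingP k w B.
  rewrite /incl_dev subUset -mulnb natrM -/p1 -/p2.
  by move: (samplingP k w B) ((T1 \subset B)%:R) ((T2 \subset B)%:R) => c a b; ring.
rewrite /Esamp (eq_bigr _ (fun B _ => expand B)) big_split /= !sumrB -!mulr_suml.
rewrite sum_samplingP -/(incl_prob T1) -/(incl_prob T2) -/p1 -/p2 !divff //.
by rewrite invfM /incl_prob /Esamp; ring.
Qed.

End InclusionProbability.

Lemma triple_upper (R : realFieldType) (r2 r3 x y s : R) :
  0 <= r3 -> r3 <= r2 -> r2 <= 1 -> 0 <= x -> 0 <= y -> s <= x + y -> s <= 1 ->
  r2 * (s + (1 - s) * r3) <= (x + (1 - x) * r2) * (y + (1 - y) * r2).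
Proof.
move=> r3_ge0 r32 r2_le1 x_ge0 y_ge0 s_le_xy s_le1.
have -> : (x + (1 - x) * r2) * (y + (1 - y) * r2)
    = r2 * (s + (1 - s) * r3) + (r2 * (1 - r2) * (x + y - s)
      + x * y * (1 - r2) ^+ 2 + r2 * (r2 - r3) * (1 - s)) by ring.
rewrite lerDl !addr_ge0 // ?mulr_ge0 ?sqr_ge0 //; lra.
Qed.

Lemma triple_lower (R : realFieldType) (r1 r2 r3 x y s : R) :
  0 <= r3 -> r3 <= r2 -> r2 <= 1 -> 2 * r1 - 1 <= r3 ->
  0 <= x -> x <= s -> 0 <= y -> y <= 1 -> s <= 1 ->
  (2 * r1 - 1) * ((x + (1 - x) * r2) * (y + (1 - y) * r2))
    <= r2 * (s + (1 - s) * r3).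
Proof.
move=> r3_ge0 r32 r2_le1 r31 x_ge0 xs y_ge0 y_le1 s_le1.
set X := x + (1 - x) * r2; set Y := y + (1 - y) * r2.
have X_ge0 : 0 <= X by rewrite /X; nra.
have [Y_ge0 Y_le1] : 0 <= Y /\ Y <= 1 by rewrite /Y; split; nra.
have Z_ge : r2 * (x + (1 - x) * r3) <= r2 * (s + (1 - s) * r3).
  apply: ler_wpM2l; first lra.
  have : 0 <= (s - x) * (1 - r3) by rewrite mulr_ge0 //; lra.
  nra.
have [r1_le|r1_gt] := lerP (2 * r1 - 1) 0.
  have : 0 <= r2 * (s + (1 - s) * r3) by rewrite mulr_ge0 //; nra.
  have : (2 * r1 - 1) * (X * Y) <= 0 by rewrite mulr_le0_ge0 // mulr_ge0.
  lra.
have XY_le : (2 * r1 - 1) * (X * Y) <= (2 * r1 - 1) * X.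
  by rewrite ler_pM2l // ler_piMr.
have : (2 * r1 - 1) * X <= r2 * (x + (1 - x) * r3).
  have : 0 <= (1 - x) * r2 * (r3 - (2 * r1 - 1)) by rewrite !mulr_ge0 //; lra.
  have : 0 <= x * (r2 - (2 * r1 - 1)) by rewrite mulr_ge0 //; lra.
  rewrite /X; nra.
lra.
Qed.

(* [x], [y], [s] are the first-index masses of [{i,j}], [{i,l}], [{i,j,l}]; with
   [g_t = r_1 ... r_t] the fraction is [p_{i,j,l} / (p_{i,j} p_{i,l})]. *)
Lemma triple_ratio_bound (R : realFieldType) (r1 r2 r3 x y s : R) :
  0 < r2 -> 0 <= r3 -> r3 <= r2 -> r2 <= r1 -> r1 <= 1 -> 2 * r1 - 1 <= r3 ->
  0 <= x -> 0 <= y -> x <= s -> y <= s -> s <= x + y -> s <= 1 ->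
  `|(s * (r1 * r2) + (1 - s) * (r1 * r2 * r3)) /
     ((x * r1 + (1 - x) * (r1 * r2)) * (y * r1 + (1 - y) * (r1 * r2))) - 1|
  <= r1^-1 - 1.
Proof.
move=> r2_gt0 r3_ge0 r32 r21 r1_le1 r31 x_ge0 y_ge0 xs ys s_le_xy s_le1.
have r1_gt0 : 0 < r1 := lt_le_trans r2_gt0 r21.
set X := x + (1 - x) * r2; set Y := y + (1 - y) * r2; set Z := s + (1 - s) * r3.
have X_gt0 : 0 < X by rewrite /X; nra.
have Y_gt0 : 0 < Y by rewrite /Y; nra.
have D_gt0 : 0 < r1 * (X * Y) by rewrite !mulr_gt0.
have -> : (s * (r1 * r2) + (1 - s) * (r1 * r2 * r3)) /
    ((x * r1 + (1 - x) * (r1 * r2)) * (y * r1 + (1 - y) * (r1 * r2)))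
    = r2 * Z / (r1 * (X * Y)).
  have -> : x * r1 + (1 - x) * (r1 * r2) = r1 * X by rewrite /X; ring.
  have -> : y * r1 + (1 - y) * (r1 * r2) = r1 * Y by rewrite /Y; ring.
  by rewrite /Z; field; rewrite !gt_eqF.
have r2_le1 : r2 <= 1 := le_trans r21 r1_le1.
have U : r2 * Z <= X * Y := triple_upper r3_ge0 r32 r2_le1 x_ge0 y_ge0 s_le_xy s_le1.
have L : (2 * r1 - 1) * (X * Y) <= r2 * Z.
  exact: triple_lower r3_ge0 r32 r2_le1 r31 x_ge0 xs y_ge0 (le_trans ys s_le1) s_le1.
rewrite ler_norml; apply/andP; split.
  suff : 2 - r1^-1 <= r2 * Z / (r1 * (X * Y)) by lra.
  rewrite ler_pdivlMr //.
  have -> : (2 - r1^-1) * (r1 * (X * Y)) = (2 * r1 - 1) * (X * Y).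
    by field; rewrite gt_eqF.
  exact: L.
by rewrite lerBlDr subrK ler_pdivrMr // mulKf ?gt_eqF.
Qed.

Section Corollary.
Variables (R : realFieldType) (d k : nat) (w x v : 'cV[R]_d) (i : 'I_d).
Hypotheses (k_ge3 : (3 <= k)%N) (kd : (k + 3 <= d)%N) (w_neq0 : w != 0).
Hypothesis x_le1 : forall j : 'I_d, `|x j 0| <= 1.

Let le_kd : (k <= d)%N. Proof. exact: leq_trans (leq_addr 3 k) kd. Qed.
Local Notation g := (unif_incl R d k).
Local Notation r := (incl_ratio R d k).
Local Notation p j := (incl_prob k w [set i; j]).

Lemma incl_ratio_bounds : [/\ 0 < r 2, r 3 <= r 2, r 2 <= r 1 & 2 * r 1 - 1 <= r 3].
Proof.
rewrite /incl_ratio !natrB; try lia.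
have : 3%:R <= k%:R :> R by rewrite ler_nat.
have : k%:R + 3%:R <= d%:R :> R by rewrite -natrD ler_nat.
set a := k%:R; set b := d%:R => kd_R k_ge3_R.
have b1 : 0 < b - 1%:R by lra.
have b2 : 0 < b - 2%:R by lra.
have b3 : 0 < b - 3%:R by lra.
split; first by rewrite divr_gt0 //; lra.
- rewrite -subr_ge0 (_ : _ - _ = (b - a) / ((b - 2%:R) * (b - 3%:R))).
    by rewrite divr_ge0 // ?mulr_ge0; lra.
  by field; rewrite !gt_eqF.
- rewrite -subr_ge0 (_ : _ - _ = (b - a) / ((b - 1%:R) * (b - 2%:R))).
    by rewrite divr_ge0 // ?mulr_ge0; lra.
  by field; rewrite !gt_eqF.
- rewrite -subr_ge0 (_ : _ - _ = (b - a) * (b - 5%:R) / ((b - 1%:R) * (b - 3%:R))).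
    by rewrite divr_ge0 // ?mulr_ge0; lra.
  by field; rewrite !gt_eqF.
Qed.

Lemma unif_incl123 : [/\ g 1 = r 1, g 2 = r 1 * r 2 & g 3 = r 1 * r 2 * r 3].
Proof. by rewrite !unif_inclS // unif_incl0 // mul1r. Qed.

Lemma unif_incl2_gt0 : 0 < g 2.
Proof.
have [r2_gt0 _ r21 _] := incl_ratio_bounds; have [_ -> _] := unif_incl123.
by rewrite mulr_gt0 // (lt_le_trans r2_gt0 r21).
Qed.

Lemma incl_prob_pair_bounds j : g 2 <= p j <= 1.
Proof.
have /andP[lo hi] := incl_prob_bounds le_kd w_neq0 [set i; j].
apply/andP; split.
  by apply: le_trans lo; apply: (unif_incl_le R le_kd); rewrite cards2 ltnS leq_b1.
by apply: le_trans hi _; rewrite -(unif_incl0 R le_kd); apply: (unif_incl_le R le_kd).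
Qed.

Lemma incl_prob_single_ge : g 1 <= p i.
Proof.
have /andP[lo _] := incl_prob_bounds le_kd w_neq0 [set i; i].
by move: lo; rewrite setUid cards1.
Qed.

Lemma incl_prob_pair_neq0 j : p j != 0.
Proof.
have /andP[lo _] := incl_prob_pair_bounds j.
by rewrite gt_eqF // (lt_le_trans unif_incl2_gt0 lo).
Qed.

Lemma incl_prob_pair_dev j : `|(p j)^-1 - 1| <= (g 2)^-1 - 1.
Proof.
have /andP[lo hi] := incl_prob_pair_bounds j.
exact: norm_invB1_le unif_incl2_gt0 lo hi.
Qed.

Lemma incl_prob_single_dev : `|(p i)^-1 - 1| <= (g 1)^-1 - 1.
Proof.
have g1_gt0 : 0 < g 1 := lt_le_trans unif_incl2_gt0 (unif_incl_le R le_kd (leqnSn 1)).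
have /andP[_ hi] := incl_prob_pair_bounds i.
exact: norm_invB1_le g1_gt0 incl_prob_single_ge hi.
Qed.

Lemma cov_triple_le j l : j != i -> l != i -> j != l ->
  `|incl_prob k w ([set i; j] :|: [set i; l]) / (p j * p l) - 1| <= (g 1)^-1 - 1.
Proof.
move=> ji li jl.
have [r2_gt0 r32 r21 r31] := incl_ratio_bounds; have [g1 g2 g3] := unif_incl123.
have pair_split j' : j' != i ->
    p j' = qmass w [set i; j'] * r 1 + (1 - qmass w [set i; j']) * (r 1 * r 2).
  by move=> j'i; rewrite incl_prob_split // cards2 eq_sym j'i /= -g2 -g1.
have card3 : #|[set i; j] :|: [set i; l]| = 3%N.
  have -> : [set i; j] :|: [set i; l] = l |: [set i; j].
    by apply/setP => y; rewrite !inE; case: (y == i); case: (y == j); case: (y == l).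
  by rewrite cardsU1 cards2 !inE (negbTE li) eq_sym (negbTE jl) eq_sym ji.
rewrite incl_prob_split // card3 /= g3 g2 (pair_split j ji) (pair_split l li) g1.
apply: triple_ratio_bound; rewrite ?incl_ratio_ge0 ?incl_ratio_le1 ?qmass_ge0
  ?qmass_le1 ?qmass_setU //; by apply: qmass_subset; rewrite ?subsetUl ?subsetUr.
Qed.

Lemma cov_incl_dev_le j l :
  `|Esamp k w (fun B => incl_dev k w [set i; j] B * incl_dev k w [set i; l] B)|
    <= (if j == l then (g 2)^-1 - 1 else (g 1)^-1 - 1).
Proof.
rewrite Esamp_incl_dev_mul ?incl_prob_pair_neq0 //.
have [<-|jl] := eqVneq j l.
  rewrite setUid invfM mulrA divff ?mul1r ?incl_prob_pair_neq0 //.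
  exact: incl_prob_pair_dev.
have sub_ii j' : [set i; i] \subset [set i; j'] by rewrite setUid sub1set !inE eqxx.
have [->|ji] := eqVneq j i.
  rewrite (setUidPr (sub_ii l)) invfM mulrCA divff ?mulr1 ?incl_prob_pair_neq0 //.
  exact: incl_prob_single_dev.
have [->|li] := eqVneq l i.
  rewrite (setUidPl (sub_ii j)) invfM mulrA divff ?mul1r ?incl_prob_pair_neq0 //.
  exact: incl_prob_single_dev.
exact: cov_triple_le.
Qed.

Lemma norm_coef_le j : `|x i 0 * x j 0 * v j 0| <= `|v j 0|.
Proof. by rewrite !normrM ler_piMl ?mulr_ile1 ?x_le1. Qed.

Lemma norm_zvec_le B : `|zvec k w x v B i 0| <= (g 2)^-1 * norm1 v.
Proof.
rewrite zvecE /norm1 mulr_sumr; apply: le_trans (ler_norm_sum _ _ _) _.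
apply: ler_sum => j _; rewrite normrM mulrC.
have /andP[lo hi] := incl_prob_pair_bounds j.
have p_gt0 : 0 < p j := lt_le_trans unif_incl2_gt0 lo.
apply: ler_pM => //; last exact: norm_coef_le.
apply: le_trans (norm_incl_dev_le B p_gt0 hi) _.
by rewrite lef_pV2 ?posrE ?unif_incl2_gt0.
Qed.

Lemma Esamp_zvec_sqr_le :
  Esamp k w (fun B => zvec k w x v B i 0 ^+ 2)
    <= ((g 2)^-1 - 1) * norm2sq v + ((g 1)^-1 - 1) * (norm1 v ^+ 2 - norm2sq v).
Proof.
under eq_Esamp => B do rewrite zvecE.
rewrite Esamp_sqr_sum.
have -> : norm2sq v = \sum_j `|v j 0| ^+ 2.
  by apply: eq_bigr => j _; rewrite real_normK ?num_real.
rewrite -double_sum_diag_split; apply: ler_sum => j _; apply: ler_sum => l _.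
apply: le_trans (ler_norm _) _; rewrite normrM.
apply: ler_pM; rewrite ?normr_ge0 ?cov_incl_dev_le //.
by rewrite normrM ler_pM ?norm_coef_le.
Qed.

Lemma unif_incl1_inv : (g 1)^-1 = (d - 1)%:R / (k - 1)%:R.
Proof.
by have [-> _ _] := unif_incl123; rewrite /incl_ratio invf_div.
Qed.

Lemma unif_incl2_inv : (g 2)^-1 = ((d - 1) * (d - 2))%:R / ((k - 1) * (k - 2))%:R.
Proof.
by have [_ -> _] := unif_incl123; rewrite /incl_ratio mulf_div invf_div -!natrM.
Qed.

End Corollary.

Theorem corollary2 (R : realFieldType) (d k : nat)
    (hk : (3 <= k)%N) (hkd : (k <= d - 3)%N)
    (w x v : 'cV[R]_d)
    (hw : w != 0)
    (hx : forall i : 'I_d, `|x i 0| <= 1) :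
  let c2 := ((d - 1) * (d - 2))%:R / ((k - 1) * (k - 2))%:R : R in
  let c1 := (d - 1)%:R / (k - 1)%:R : R in
  forall i : 'I_d,
    (forall B : {set 'I_d}, 0 < samplingP k w B ->
       `|zvec k w x v B i 0| <= c2 * norm1 v)
    /\
    Esamp k w (fun B => zvec k w x v B i 0 ^+ 2)
      <= (c2 - 1) * norm2sq v + (c1 - 1) * (norm1 v ^+ 2 - norm2sq v).
Proof.
move=> c2 c1 i; have kd : (k + 3 <= d)%N by lia.
rewrite /c2 /c1 -(unif_incl1_inv R kd) -(unif_incl2_inv R kd).
split=> [B _|]; first exact: norm_zvec_le.
exact: Esamp_zvec_sqr_le.
Qed.
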